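(* For any tree $T$ with at least four vertices, $\mu(T)\le\mu'(T)$, with equality only when $T$ is the path $P_4$ on four vertices.
   Context: A leaf is a vertex of degree at most 1. $\mathcal{S}(T)$ is the set of nonempty subsets of $V(T)$ inducing a connected subgraph (subtrees), and $\mu(T)$ is the average cardinality of a set in $\mathcal{S}(T)$. $\mathcal{S}'(T)$ is obtained from $\mathcal{S}(T)$ by adding the empty set and removing the singleton $\{v\}$ for every leaf $v$ (other singletons remain). $\mu'(T)$ is the average cardinality of a set in $\mathcal{S}'(T)$ (the empty set counting with cardinality 0). *)

From mathcomp Require Import all_boot all_order all_algebra.
Set Implicit Arguments. Unset Strict Implicit. Unset Printing Implicit Defensive.
Import Order.TTheory GRing.Theory Num.Theory.

Definition simple_graph (T : finType) (e : rel T) : Prop :=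
  symmetric e /\ irreflexive e.

Definition induced_connected (T : finType) (e : rel T) (A : {set T}) : bool :=
  [forall x in A, forall y in A,
     connect (fun u v => [&& e u v, u \in A & v \in A]) x y].

Definition num_edges (T : finType) (e : rel T) : nat :=
  #|[set p : T * T | e p.1 p.2]|./2.

Definition is_tree (T : finType) (e : rel T) : Prop :=
  simple_graph e /\ 0 < #|T| /\ induced_connected e [set: T]
  /\ num_edges e = #|T| - 1.

Definition degree (T : finType) (e : rel T) (v : T) : nat := #|[set u | e v u]|.

Definition is_leaf (T : finType) (e : rel T) (v : T) : bool := degree e v <= 1.

Definition subtrees (T : finType) (e : rel T) : {set {set T}} :=
  [set A : {set T} | (A != set0) && induced_connected e A].

Definition subtrees' (T : finType) (e : rel T) : {set {set T}} :=
  (subtrees e :\: [set [set v] | v in [pred v | is_leaf e v]]) :|: [set set0].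

Definition avg_card (T : finType) (F : {set {set T}}) : rat :=
  ((\sum_(A in F) #|A|)%:R / #|F|%:R)%R.

Definition mu (T : finType) (e : rel T) : rat := avg_card (subtrees e).
Definition mu' (T : finType) (e : rel T) : rat := avg_card (subtrees' e).

Definition is_P4 (T : finType) (e : rel T) : Prop :=
  exists f : 'I_4 -> T, bijective f /\
    forall i j : 'I_4, e (f i) (f j) = ((i.+1 == j) || (j.+1 == i)).

(** Write [N] for the number of subtrees, [s] for their total size, [n] for
    the number of vertices and [l >= 2] for the number of leaves.  Since
    [S'(T)] drops the [l] leaf singletons and adds the empty set,
    [mu' = (s - l) / (N - l + 1)], and [mu <= mu'] amounts to
    [N l <= s (l - 1)], which follows from [2 N <= s].  The latter holds
    because among the subtrees are [T] and [T] minus one of two leaves, of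
    total size [3 n - 2], while at most [n] of the other subtrees are
    singletons and the rest have at least two vertices; this gives
    [2 N + 2 n <= s + 8].  Equality forces [l = 2] and [s = 2 N], hence
    [n = 4], and the only tree on four vertices with two leaves is [P4]. *)

From mathcomp Require Import all_boot all_order all_algebra.
From mathcomp Require Import zify ring lra.
Import Order.TTheory GRing.Theory Num.Theory.
Set Implicit Arguments. Unset Strict Implicit. Unset Printing Implicit Defensive.

Lemma sum_nat_bool (T : finType) (A : {pred T}) (P : pred T) :
  \sum_(x in A) (P x : nat) = #|[set x in A | P x]|.
Proof.
rewrite -sum1dep_card [RHS]big_mkcond [LHS]big_mkcond.
by apply: eq_bigr => x _; case: (x \in A); case: (P x).
Qed.

Section Graphs.

Variables (T : finType) (e : rel T).

Definition arcs : {set T * T} := [set p | e p.1 p.2].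

Definition leaves : {set T} := [set v | is_leaf e v].

Lemma sum_degree : \sum_v degree e v = #|arcs|.
Proof.
rewrite -sum1dep_card (eq_bigr (fun v => \sum_(u | e v u) 1)).
  by rewrite pair_big_dep; apply: eq_bigl.
by move=> v _; rewrite /degree sum1dep_card.
Qed.

(* Swapping the endpoints matches the arcs going up in [enum_rank] with
   those going down; loops are excluded by irreflexivity. *)
Lemma card_arcs_double : simple_graph e -> #|arcs| = (num_edges e).*2.
Proof.
case=> sym irr; rewrite /num_edges -/arcs.
suff [m ->] : exists m, #|arcs| = m.*2 by rewrite doubleK.
exists (\sum_(p : T * T | e p.1 p.2 && (enum_rank p.1 < enum_rank p.2)) 1).
rewrite -sum1dep_card -addnn (bigID (fun p => enum_rank p.1 < enum_rank p.2)) /=.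
congr (_ + _); rewrite (reindex (fun p : T * T => (p.2, p.1))) /=; last first.
  by exists (fun p : T * T => (p.2, p.1)) => -[].
apply: eq_bigl => -[u v] /=; rewrite sym.
case euv: (e u v); rewrite ?andbF //= ?andbT.
have /negbTE neq : enum_rank u != enum_rank v :> nat.
  by rewrite (inj_eq val_inj) (inj_eq enum_rank_inj); apply: contraTneq euv => ->; rewrite irr.
by rewrite -leqNgt ltn_neqAle neq.
Qed.

Lemma induced_connect (A : {set T}) x y :
  induced_connected e A -> x \in A -> y \in A ->
  connect (fun u v => [&& e u v, u \in A & v \in A]) x y.
Proof. by move=> /forall_inP connA xA yA; move/forall_inP: (connA x xA); apply. Qed.

Lemma path_induced (A : {set T}) x p :
  path e x p -> all [in A] (x :: p) ->
  path (fun u v => [&& e u v, u \in A & v \in A]) x p.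
Proof.
elim: p x => //= y p IHp x /andP [exy pth] /and3P [xA yA pA].
by rewrite exy xA yA IHp //= yA.
Qed.

End Graphs.

Section Trees.

Variables (T : finType) (e : rel T).
Hypothesis tree_e : is_tree e.

Lemma tree_degree_gt0 v : 1 < #|T| -> 0 < degree e v.
Proof.
case: tree_e => _ [_ [conn _]] /card_gt1P [x [y [_ _ nxy]]].
have [w nwv] : exists w, w != v.
  by case: (eqVneq x v) => [<-|]; [exists y; rewrite eq_sym | exists x].
have /connectP [[|u p] /= pth lst] := induced_connect conn (in_setT v) (in_setT w).
  by rewrite lst eqxx in nwv.
by apply/card_gt0P; exists u; rewrite inE; case/andP: pth => /andP [].
Qed.

(* Handshake: the degrees sum to [2 (n - 1)], and every non-leaf contributes at least [2]. *)
Lemma tree_leaves_ge2 : 1 < #|T| -> 1 < #|leaves e|.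
Proof.
move=> n_gt1; case: tree_e => simple_e [_ [_ edges_e]].
have : \sum_(v : T) 2 <= \sum_v (degree e v + is_leaf e v).
  apply: leq_sum => v _; have := tree_degree_gt0 v n_gt1.
  by rewrite /is_leaf; case: leqP; lia.
rewrite big_split /= sum_degree card_arcs_double // edges_e sum_nat_bool.
rewrite sum_nat_const cardT -cardE -mul2n.
have -> : [set v in xpredT | is_leaf e v] = leaves e by [].
set n := #|T| in n_gt1 *; lia.
Qed.

Lemma tree_connected_setC1_leaf x : is_leaf e x -> induced_connected e [set~ x].
Proof.
case: tree_e => [[sym irr] [_ [conn _]]] leaf_x.
apply/forall_inP => y yx; apply/forall_inP => z zx.
have /connectP [p pth lst] := induced_connect conn (in_setT y) (in_setT z).
have {}pth : path e y p by apply: sub_path pth => u v /andP [].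
move: lst; case/shortenP: pth => q qpth uq _ zq.
have x_notin : x \notin y :: q.
  rewrite in_cons eq_sym; move: yx; rewrite !inE => /negbTE -> /=; apply/negP => xq.
  move: qpth uq zq; case/splitPr: xq => q1 [|w q2]; rewrite last_cat /=.
    by move=> _ _ zx_eq; rewrite -zx_eq !inE eqxx in zx.
  rewrite cat_path /= => /and4P [_ e1 e2 _].
  move=> uq _; move: (uq : uniq ((y :: q1) ++ [:: x, w & q2])).
  rewrite cat_uniq => /and3P [_ /hasPn disj _].
  have nw : last y q1 != w.
    by apply: contraTneq (mem_last y q1) => ->; apply: disj; rewrite !inE eqxx orbT.
  have : [set last y q1; w] \subset [set u | e x u].
    by apply/subsetP => u; rewrite !inE => /orP [] /eqP ->; rewrite // sym.
  by move/subset_leq_card; rewrite cards2 nw => /leq_trans/(_ leaf_x).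
apply/connectP; exists q => //; apply: path_induced => //.
by apply/allP => u uq'; rewrite !inE; apply: contraNneq x_notin => <-.
Qed.

End Trees.

Lemma sum_card_family_lb (T : finType) (X : {set {set T}}) :
  set0 \notin X -> 2 * #|X| <= \sum_(A in X) #|A| + #|T|.
Proof.
move=> X0.
have size2 : \sum_(A in X) 2 <= \sum_(A in X) (#|A| + (#|A| == 1)).
  apply: leq_sum => A AX; have : 0 < #|A|.
    by rewrite card_gt0; apply: contraNneq X0 => <-.
  by case: #|A| => [|[|k]].
have singletons : \sum_(A in X) (#|A| == 1 : nat) <= #|T|.
  rewrite sum_nat_bool; apply: leq_trans (leq_imset_card (fun x : T => [set x]) T).
  apply: subset_leq_card; apply/subsetP => A; rewrite !inE => /andP [_ /cards1P [x ->]].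
  exact: imset_f.
move: size2; rewrite big_split sum_nat_const /= mulnC => /leq_trans; apply.
by rewrite leq_add2l.
Qed.

Section Subtrees.

Variables (T : finType) (e : rel T).

Lemma set1_subtree v : [set v] \in subtrees e.
Proof.
rewrite inE; apply/andP; split; first by apply/set0Pn; exists v; rewrite inE.
apply/forall_inP => x /set1P ->; apply/forall_inP => y /set1P ->; exact: connect0.
Qed.

Let leaf_singletons := [set [set v] | v in [pred v | is_leaf e v]].

Lemma card_leaf_singletons : #|leaf_singletons| = #|leaves e|.
Proof. by rewrite card_imset; [apply: eq_card => v; rewrite !inE | apply: set1_inj]. Qed.

Lemma leaf_singletons_sub : leaf_singletons \subset subtrees e.
Proof. by apply/subsetP => _ /imsetP [v _ ->]; exact: set1_subtree. Qed.

Lemma subtrees'E : subtrees' e = set0 |: (subtrees e :\: leaf_singletons).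
Proof. by rewrite setUC. Qed.

Lemma set0_notin_subtrees : set0 \notin subtrees e.
Proof. by rewrite inE eqxx. Qed.

Lemma card_leaves_le_subtrees : #|leaves e| <= #|subtrees e|.
Proof. by rewrite -card_leaf_singletons subset_leq_card // leaf_singletons_sub. Qed.

Lemma card_subtrees' : #|subtrees' e| = (#|subtrees e| - #|leaves e|).+1.
Proof.
rewrite subtrees'E cardsU1 in_setD (negbTE set0_notin_subtrees) andbF.
by rewrite cardsD (setIidPr leaf_singletons_sub) card_leaf_singletons.
Qed.

Lemma sum_subtrees' :
  \sum_(A in subtrees' e) #|A| + #|leaves e| = \sum_(A in subtrees e) #|A|.
Proof.
rewrite subtrees'E big_setU1 /=; last by rewrite in_setD (negbTE set0_notin_subtrees) andbF.
rewrite cards0 add0n [RHS](big_setID leaf_singletons) (setIidPr leaf_singletons_sub) addnC.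
congr (_ + _); rewrite -card_leaf_singletons -sum1_card.
by apply: eq_bigr => _ /imsetP [v _ ->]; rewrite cards1.
Qed.

End Subtrees.

Lemma tree_sum_subtrees_lb (T : finType) (e : rel T) : is_tree e -> 4 <= #|T| ->
  2 * #|subtrees e| + 2 * #|T| <= \sum_(A in subtrees e) #|A| + 8.
Proof.
move=> tree_e n_ge4.
have /card_gt1P [a [b [la lb nab]]] : 1 < #|leaves e|.
  by apply: tree_leaves_ge2 => //; apply: leq_trans n_ge4.
rewrite !inE in la lb.
set S := subtrees e; set F := [set: T] |: [set [set~ a]; [set~ b]].
have conn : induced_connected e [set: T] by case: tree_e => _ [_ []].
have FS : F \subset S.
  apply/subsetP => A; rewrite !inE => /or3P [] /eqP ->.
  - by rewrite conn andbT; apply/set0Pn; exists a.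
  - by rewrite tree_connected_setC1_leaf // andbT; apply/set0Pn; exists b; rewrite !inE eq_sym.
  - by rewrite tree_connected_setC1_leaf // andbT; apply/set0Pn; exists a; rewrite !inE.
have T_notin : [set: T] \notin [set [set~ a]; [set~ b]].
  by rewrite !inE; apply/norP; split; apply/eqP => /setP;
     [move/(_ a) | move/(_ b)]; rewrite !inE eqxx.
have ab_neq : [set~ a] != [set~ b].
  by apply/eqP => /setP/(_ a); rewrite !inE eqxx (negbTE nab).
have card_F : #|F| = 3 by rewrite cardsU1 T_notin cards2 ab_neq.
have sum_F : \sum_(A in F) #|A| = 3 * #|T| - 2.
  rewrite big_setU1 //= big_setU1 ?inE //= big_set1 cardsT !cardsC1.
  set n := #|T| in n_ge4 *; lia.
have := @sum_card_family_lb T (S :\: F).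
rewrite in_setD (negbTE (set0_notin_subtrees e)) andbF cardsD (setIidPr FS) card_F.
move=> /(_ isT) rest.
have S_ge3 : 3 <= #|S| by rewrite -card_F subset_leq_card.
rewrite (big_setID F) (setIidPr FS) /= sum_F.
move: rest S_ge3 n_ge4; set s := \sum_(A in S :\: F) _; set n := #|T|; set N := #|S|.
lia.
Qed.

Section FourVertices.

Variables (T : finType) (e : rel T).
Hypotheses (simple_e : simple_graph e) (card_T : #|T| = 4).

Lemma is_P4_path (w0 w1 w2 w3 : T) : uniq [:: w0; w1; w2; w3] ->
  e w0 w1 -> e w1 w2 -> e w2 w3 -> ~~ e w0 w2 -> ~~ e w0 w3 -> ~~ e w1 w3 ->
  is_P4 e.
Proof.
case: simple_e => sym irr uq e01 e12 e23 /negbTE n02 /negbTE n03 /negbTE n13.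
exists (fun i : 'I_4 => nth w0 [:: w0; w1; w2; w3] i); split.
  apply: inj_card_bij; last by rewrite card_T card_ord.
  by move=> i j /eqP; rewrite nth_uniq // => /eqP /val_inj.
by move=> [[|[|[|[|i]]]] ?] [[|[|[|[|j]]]] ?] //=;
  rewrite ?irr ?e01 ?e12 ?e23 ?n02 ?n03 ?n13 // sym ?e01 ?e12 ?e23 ?n02 ?n03 ?n13.
Qed.

(* A vertex of degree at most one cannot serve both non-leaves, which need two neighbours each. *)
Lemma two_leaves_is_P4 : #|leaves e| = 2 -> is_P4 e.
Proof.
move=> /eqP /cards2P [a [b [nab leaves_ab]]].
have : #|~: leaves e| == 2.
  by have := cardsC (leaves e); rewrite leaves_ab cards2 nab card_T => -[<-].
case/cards2P => c [d [ncd inner_cd]].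
have mem_abcd u : u \in [:: a; b; c; d].
  case: (boolP (u \in leaves e)); rewrite -?in_setC ?inner_cd ?leaves_ab !inE;
  by case/orP => ->; rewrite ?orbT.
have uq : uniq [:: a; b; c; d].
  by apply/card_uniqP; rewrite /= -card_T; apply: eq_card => u; rewrite mem_abcd.
have sum4 (F : T -> nat) : \sum_u F u = F a + F b + F c + F d.
  rewrite (eq_bigl [in [:: a; b; c; d]]) => [|u]; last by rewrite mem_abcd.
  by rewrite -big_uniq //= !big_cons big_nil addn0 !addnA.
have deg4 v : degree e v = e v a + e v b + e v c + e v d.
  by rewrite /degree -sum1dep_card big_mkcond sum4.
have leaf u : u \in [set a; b] -> degree e u <= 1 by rewrite -leaves_ab inE.
have inner u : u \in [set c; d] -> 1 < degree e u by rewrite -inner_cd !inE ltnNge.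
have := leaf a; have := leaf b; have := inner c; have := inner d.
rewrite !inE !eqxx ?orbT !deg4 => /(_ isT) dd /(_ isT) dc /(_ isT) db /(_ isT) da.
have uq_acdb : uniq [:: a; c; d; b].
  by rewrite (perm_uniq (_ : perm_eq _ [:: a; b; c; d])) // perm_cons (perm_rcons b [:: c; d]).
have uq_bcda : uniq [:: b; c; d; a] by rewrite -(rot_uniq 1) in uq.
have := is_P4_path uq_acdb; have := is_P4_path uq_bcda.
case: simple_e da db dc dd => sym irr.
rewrite !irr (sym b a) (sym c a) (sym d a) (sym c b) (sym d b) (sym d c).
by case: (e a b); case: (e a c); case: (e a d); case: (e b c); case: (e b d); case: (e c d)
  => //= _ _ _ _ p1 p2; by [apply: p1 | apply: p2].
Qed.

End FourVertices.

Section Means.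

Local Open Scope ring_scope.

Lemma mean_le_drop_singletons (R : realFieldType) (s N l : R) :
  2 <= l -> l <= N -> 2 * N <= s ->
  s / N <= (s - l) / (N - l + 1) /\
  (s / N = (s - l) / (N - l + 1) -> l = 2 /\ s = 2 * N).
Proof.
move=> l_ge2 l_leN sN.
have N_gt0 : 0 < N by lra.
have D_gt0 : 0 < N - l + 1 by lra.
have slack : (s - l) * N - s * (N - l + 1) = (s - 2 * N) * (l - 1) + N * (l - 2) by ring.
have t1 : 0 <= (s - 2 * N) * (l - 1) by apply: mulr_ge0; lra.
have t2 : 0 <= N * (l - 2) by apply: mulr_ge0; lra.
split.
  by rewrite ler_pdivrMr // mulrAC ler_pdivlMr // -subr_ge0 slack addr_ge0.
move=> /eqP; rewrite eqr_div ?lt0r_neq0 // => /eqP cross.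
have : (s - 2 * N) * (l - 1) + N * (l - 2) == 0 by rewrite -slack cross subrr.
by rewrite paddr_eq0 // !mulf_eq0 => /andP [/orP [] /eqP h1 /orP [] /eqP h2]; lra.
Qed.

End Means.

Theorem mainTheorem6 (T : finType) (e : rel T) :
  is_tree e -> 4 <= #|T| ->
  (mu e <= mu' e)%R /\ (mu e = mu' e -> is_P4 e).
Proof.
move=> tree_e n_ge4.
have l_ge2 : 1 < #|leaves e| by apply: tree_leaves_ge2 => //; apply: leq_trans n_ge4.
have lb := tree_sum_subtrees_lb tree_e n_ge4.
have l_leN := card_leaves_le_subtrees e.
rewrite /mu /mu' /avg_card card_subtrees' -(sum_subtrees' e) in lb *.
set s' := \sum_(A in subtrees' e) #|A|; set l := #|leaves e|; set N := #|subtrees e|.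
have := @mean_le_drop_singletons rat (s' + l)%:R N%:R l%:R.
rewrite natrD addrK -natrB // natr1 -natrM !ler_nat => /(_ l_ge2 l_leN) [|le_mu eq_mu].
  by rewrite -natrD ler_nat; move: lb n_ge4; set n := #|T|; lia.
split=> // /eq_mu [/eqP + /eqP]; rewrite -natrD !eqr_nat => /eqP l_eq2 /eqP sN.
apply: two_leaves_is_P4 l_eq2; first by case: tree_e.
by move: lb n_ge4; rewrite sN; set n := #|T|; lia.
Qed.
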